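(* For every $n\ge0$, $$R_{2n}(t,c)=\frac{q_{2n}(\lambda_0,c)}{(4\lambda_0^3-c)^{5n+2}},\qquad R_{2n+1}(t,c)=\frac{\lambda_0^{1/2}\,q_{2n+1}(\lambda_0,c)}{(4\lambda_0^3-c)^{5n+9/2}},$$ for some polynomials $q_{2n},q_{2n+1}\in\mathbb C[\lambda_0,c]$ whose degrees in $\lambda_0$ are at most $9n+4$ and $9n+8$ respectively (the square roots being the branches consistent with $R_{-1}=\sqrt\Delta=\lambda_0^{-1/2}(4\lambda_0^3-c)^{1/2}$).
   Context: Let $\eta$ be a large parameter and $c\in\mathbb C$. $(H_{\rm II})$: $\frac{d\lambda}{dt}=\eta\nu$, $\frac{d\nu}{dt}=\eta(2\lambda^3+t\lambda+c)$. Let $\lambda_0(t,c)$ be a branch of $2\lambda_0^3+t\lambda_0+c=0$, so that $\Delta:=6\lambda_0^2+t=(4\lambda_0^3-c)/\lambda_0$. The 0-parameter solution $\lambda^{(0)}=\sum_{k\ge0}\eta^{-k}\lambda^{(0)}_k$, $\nu^{(0)}$ is the formal power series solution of $(H_{\rm II})$ with $\lambda^{(0)}_0=\lambda_0$, $\nu^{(0)}_0=0$. $R=\sum_{k\ge-1}\eta^{-k}R_k(t,c)$ is the formal solution of $R^2+\frac{dR}{dt}=\eta^2(6(\lambda^{(0)})^2+t)$ with $R_{-1}=\sqrt\Delta$, i.e. $R_{-1}^2=\Delta$ and $2R_{-1}R_{k+1}+\sum_{k_1+k_2=k,\,k_j\ge0}R_{k_1}R_{k_2}+\frac{dR_k}{dt}=6\sum_{l_1+l_2=k+2,\,l_j\ge0}\lambda^{(0)}_{l_1}\lambda^{(0)}_{l_2}$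 for $k\ge-1$ (the $l_1+l_2=k+2$ sum excluding nothing, with the $k=-1$ case reading $2R_{-1}R_0+\frac{dR_{-1}}{dt}=0$ after cancelling $R_{-1}^2=6\lambda_0^2+t$). *)

From HB Require Import structures.
From mathcomp Require Import all_boot all_order all_algebra all_field.
Set Implicit Arguments. Unset Strict Implicit. Unset Printing Implicit Defensive.
Import Order.TTheory GRing.Theory Num.Theory.
Local Open Scope ring_scope.

(* Coefficient of eta^{-m} in 2*lambda^3 + t*lambda + c, where
   lambda = sum_k eta^{-k} lam k. *)
Definition cubic_coef (K : fieldType) (t c : K) (lam : nat -> K) (m : nat) : K :=
  2 * (\sum_(i < m.+1) \sum_(j < (m - i).+1) lam i * lam j * lam (m - i - j)%N)
  + t * lam m + (if m == 0%N then c else 0).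

(* Evaluation of q in C[lambda0][c] (outer variable = lambda0, inner = c),
   coefficients mapped into K via iota, at lambda0 = x, c = y. *)
Definition peval2 (K : fieldType) (iota : {rmorphism algC -> K})
  (q : {poly {poly algC}}) (x y : K) : K :=
  ((map_poly (map_poly iota) q).[x%:P]).[y].

From HB Require Import structures.
From mathcomp Require Import all_boot all_order all_algebra all_field.
From mathcomp Require Import zify ring.
Import Order.TTheory GRing.Theory Num.Theory.
Set Implicit Arguments. Unset Strict Implicit. Unset Printing Implicit Defensive.
Local Open Scope ring_scope.

(* Everything happens in a field K with a derivation D that kills the constants
   iota(algC) and c and satisfies D t = 1, i.e. D = d/dt.  Write l = lambda_0
   (a root of 2 l^3 + t l + c = 0) and E = 4 l^3 - c = l * Delta.
   - Differentiating the cubic gives D l = - l^2 / E (D_cubic_root).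
   - fracE d b is the set of P(l, c) / E^b with deg_l P <= d.  It is closed
     under sums, constant multiples and products (degrees and exponents add),
     grows along (d, b) -> (d + 3, b + 1) (multiply by E / E), and D maps
     fracE d b into fracE (d + 4) (b + 2).
   - Splitting off the terms containing lambda_m from the cubic convolution,
     lambda_m = (D nu_(m-1) - 2 * (terms with indices < m)) * l / E; strong
     induction then gives lambda_(2p+1) = 0 and lambda_(2p) in
     fracE (9p - 2) (5p - 1) for p > 0 (lambda_0 = l is in fracE 1 0).
   - With rho = s1 / s2 = 1 / R_(-1) one has rho^2 = l / E and D rho = rho * g
     with g in fracE 4 2; the recursion R_(k+1) = rho (6 sum lam lam -
     sum R R - D R_k) / 2 yields, by induction on n, R_(2n) in
     fracE (9n + 4) (5n + 2) and R_(2n+1) in rho * fracE (9n + 8) (5n + 4).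
   The main theorem rewrites rho / E^(5n+4) as s1 / s2^(10n+9). *)

Lemma even_or_odd i : exists p, i = (2 * p)%N \/ i = (2 * p).+1.
Proof.
exists i./2; have := odd_double_half i; rewrite -mul2n.
by move: (i./2) => p; case: (odd i) => /= <-; [right|left].
Qed.

Lemma big_ord2_nat (A : nmodType) (G : nat -> nat -> A) m :
  \sum_(i < m.+1) \sum_(j < (m - i).+1) G i j
  = \sum_(0 <= i < m.+1) \sum_(0 <= j < (m - i).+1) G i j.
Proof. by rewrite big_mkord; apply: eq_bigr => i _; rewrite big_mkord. Qed.

Lemma big_nat_vanish (A : nmodType) (F : nat -> A) a b :
  (forall i, (a <= i < b)%N -> F i = 0) -> \sum_(a <= i < b) F i = 0.
Proof. by move=> F0; rewrite big1_seq // => i /andP[_]; rewrite mem_index_iota; apply: F0. Qed.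

Definition conv3_low (A : comNzRingType) (f : nat -> A) (m : nat) : A :=
  \sum_(i < m.+1) \sum_(j < (m - i).+1)
    (if [&& i < m, j < m & m - i - j < m]%N then f i * f j * f (m - i - j)%N else 0).

Lemma conv3_low_ind (A : comNzRingType) (P : A -> Prop) (f : nat -> A) m :
  P 0 -> (forall x y, P x -> P y -> P (x + y)) ->
  (forall i j k, (i + j + k = m)%N -> (i < m)%N -> (j < m)%N -> (k < m)%N -> P (f i * f j * f k)) ->
  P (conv3_low f m).
Proof.
move=> P0 PD Pterm; apply: big_ind => // i _; apply: big_ind => // j _.
case: ifP => // /and3P[i_lt j_lt k_lt]; apply: Pterm => //.
by have := ltn_ord j; lia.
Qed.

(* For m > 0 the only terms of the cubic convolution involving the index m
   are the three permutations of f_m f_0 f_0. *)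
Lemma conv3_split (A : comNzRingType) (f : nat -> A) m : (0 < m)%N ->
  \sum_(i < m.+1) \sum_(j < (m - i).+1) f i * f j * f (m - i - j)%N
  = 3 * f 0%N ^+ 2 * f m + conv3_low f m.
Proof.
move=> m_gt0; set low := fun i j : nat => [&& i < m, j < m & m - i - j < m]%N.
pose T i j := f i * f j * f (m - i - j)%N.
have high : \sum_(i < m.+1) \sum_(j < (m - i).+1) (if low i j then 0 else T i j)
            = T 0%N 0%N + T 0%N m + T m 0%N.
  pose S i := \sum_(0 <= j < (m - i).+1) (if low i j then 0 else T i j).
  rewrite (big_ord2_nat (fun i j => if low i j then 0 else T i j)) -/(S _).
  rewrite (_ : \sum_(0 <= i < m.+1) _ = \sum_(0 <= i < m.+1) S i) //.
  rewrite big_ltn // big_nat_recr // big_nat_vanish; last first.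
    by move=> i i_lt; apply: big_nat_vanish => j j_lt; rewrite /low ifT //; lia.
  have -> : S m = T m 0%N by rewrite /S subnn big_nat1 /low ifF //; lia.
  rewrite /S subn0 big_ltn // big_nat_recr // big_nat_vanish; last first.
    by move=> j j_lt; rewrite /low ifT //; lia.
  by rewrite /low !ifF ?subn0 ?ltnn ?andbF ?andFb //= !add0r.
transitivity (\sum_(i < m.+1) \sum_(j < (m - i).+1)
    ((if low i j then 0 else T i j) + (if low i j then T i j else 0))).
  by apply: eq_bigr => i _; apply: eq_bigr => j _; case: (low i j); rewrite ?add0r ?addr0.
under eq_bigr do rewrite big_split.
rewrite big_split /= high.
by congr (_ + _); rewrite /T !subn0 !subnn; ring.
Qed.

Lemma cubic_disc (A : comNzRingType) (t c l : A) : 2 * l ^+ 3 + t * l + c = 0 ->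
  (6 * l ^+ 2 + t) * l = 4 * l ^+ 3 - c.
Proof. by move=> root; rewrite -[RHS]addr0 -root; ring. Qed.

Lemma mul2S n : (2 * n.+1 = (2 * n).+2)%N.
Proof. by rewrite mulnSr addn2. Qed.

Lemma natr_iota_neq0 (K : fieldType) (iota : {rmorphism algC -> K}) n :
  (0 < n)%N -> n%:R != 0 :> K.
Proof. by move=> n_gt0; rewrite -(rmorph_nat iota) fmorph_eq0 pnatr_eq0 -lt0n. Qed.

Section Derivation.
Variables (K : fieldType) (iota : {rmorphism algC -> K}) (D : K -> K).
Hypothesis D_add : forall x y, D (x + y) = D x + D y.
Hypothesis D_mul : forall x y, D (x * y) = D x * y + x * D y.
Hypothesis D_iota : forall a, D (iota a) = 0.

Lemma D0 : D 0 = 0.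
Proof. by apply: (addrI (D 0)); rewrite -D_add !addr0. Qed.

Lemma DN x : D (- x) = - D x.
Proof. by apply/eqP; rewrite -addr_eq0 -D_add addNr D0. Qed.

Lemma DB x y : D (x - y) = D x - D y.
Proof. by rewrite D_add DN. Qed.

Lemma D_nat n : D n%:R = 0.
Proof. by rewrite -(rmorph_nat iota) D_iota. Qed.

Lemma D1 : D 1 = 0.
Proof. exact: (D_nat 1). Qed.

Lemma DX x n : D (x ^+ n) = n%:R * x ^+ n.-1 * D x.
Proof.
elim: n => [|n IH]; first by rewrite D1 !mul0r.
by rewrite exprS D_mul IH; case: n {IH} => [|n] /=; rewrite ?expr0 ?exprS; ring.
Qed.

Lemma DV x : x != 0 -> D x^-1 = - D x / x ^+ 2.
Proof.
move=> x_neq0; have : D x * x^-1 + x * D x^-1 = 0 by rewrite -D_mul mulfV // D1.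
move/eqP; rewrite addrC addr_eq0 => /eqP Dxinv.
by apply: (mulfI x_neq0); rewrite Dxinv; field.
Qed.

Lemma D_inv_exp y b : y != 0 -> D (y ^+ b)^-1 = - b%:R * D y / y ^+ b.+1.
Proof.
move=> y_neq0; rewrite DV ?expf_neq0 // DX.
by case: b => [|b] /=; rewrite !exprS ?expr0; field; rewrite ?expf_neq0 ?oner_eq0 ?y_neq0.
Qed.

Lemma D_cubic_root t c l : D t = 1 -> D c = 0 -> 2 * l ^+ 3 + t * l + c = 0 ->
  4 * l ^+ 3 - c != 0 -> D l = - l ^+ 2 / (4 * l ^+ 3 - c).
Proof.
move=> Dt Dc root E_neq0.
have Droot : (6 * l ^+ 2 + t) * D l + l = 0.
  have := congr1 D root; rewrite !D_add (D_mul 2) (D_mul t) DX Dt Dc D_nat D0 /= => <-.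
  ring.
apply: (mulIf E_neq0); rewrite mulfVK // -(cubic_disc root).
by transitivity (((6 * l ^+ 2 + t) * D l + l) * l - l ^+ 2); [ring | rewrite Droot; ring].
Qed.

Lemma D_sqrt s x : s ^+ 2 = x -> s != 0 -> D s = D x / (2 * s).
Proof.
move=> sq_s s_neq0; have := DX s 2; rewrite sq_s /= => ->.
by field; rewrite s_neq0 (natr_iota_neq0 iota).
Qed.


Section Representation.
Variables c l : K.
Local Notation E := (4 * l ^+ 3 - c).
Local Notation pv q := (peval2 iota q l c).
Hypothesis Dc : D c = 0.
Hypothesis E_neq0 : E != 0.
Hypothesis Dl : D l = - l ^+ 2 / E.

Lemma pv0 : pv 0 = 0.
Proof. by rewrite /peval2 rmorph0 !horner0. Qed.

Lemma pvD p q : pv (p + q) = pv p + pv q.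
Proof. by rewrite /peval2 rmorphD !hornerD. Qed.

Lemma pvN q : pv (- q) = - pv q.
Proof. by rewrite /peval2 rmorphN !hornerN. Qed.

Lemma pvM p q : pv (p * q) = pv p * pv q.
Proof. by rewrite /peval2 rmorphM !hornerM. Qed.

Lemma pvX_exp q n : pv (q ^+ n) = pv q ^+ n.
Proof.
elim: n => [|n IH]; last by rewrite !exprS pvM IH.
by rewrite /peval2 !expr0 rmorph1 !hornerC.
Qed.

Lemma pvC a : pv a%:P%:P = iota a.
Proof. by rewrite /peval2 map_polyC /= map_polyC /= !hornerC. Qed.

Lemma pvX : pv 'X = l.
Proof. by rewrite /peval2 map_polyX hornerX hornerC. Qed.

Lemma pvc : pv 'X%:P = c.
Proof. by rewrite /peval2 map_polyC /= map_polyX hornerC hornerX. Qed.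

Lemma D_coef_eval (a : {poly algC}) : D (map_poly iota a).[c] = 0.
Proof.
elim/poly_ind: a => [|a x IH]; first by rewrite rmorph0 horner0 D0.
rewrite rmorphD rmorphM /= map_polyX map_polyC /= hornerD hornerMX hornerC.
by rewrite D_add D_mul IH Dc D_iota; ring.
Qed.

Lemma Dpv q : D (pv q) = pv q^`() * D l.
Proof.
elim/poly_ind: q => [|q a IH]; first by rewrite deriv0 pv0 D0 mul0r.
rewrite derivMXaddC !pvD !pvM pvX D_add D_mul IH.
have -> : pv a%:P = (map_poly iota a).[c] by rewrite /peval2 map_polyC hornerC.
by rewrite D_coef_eval; ring.
Qed.

Definition E_poly : {poly {poly algC}} := (4%:R : algC)%:P%:P * 'X^3 - 'X%:P.

Lemma pvE : pv E_poly = E.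
Proof. by rewrite pvD pvN pvM pvX_exp pvC pvX pvc rmorph_nat. Qed.

Lemma size_E_poly : (size E_poly <= 4)%N.
Proof.
apply: leq_trans (size_polyD _ _) _; rewrite size_polyN geq_max.
rewrite (leq_trans (size_polyC_leq1 _)) // andbT.
apply: leq_trans (size_polyMleq _ _) _; rewrite size_polyXn.
by rewrite addnS /= addn3 !ltnS size_polyC_leq1.
Qed.

Lemma size_E_poly_exp k : (size (E_poly ^+ k) <= (3 * k).+1)%N.
Proof.
have le3 : ((size E_poly).-1 <= 3)%N by have := size_E_poly; lia.
have := leq_mul le3 (leqnn k); rewrite -size_exp => h.
by apply: leq_trans (leqSpred _) _; rewrite ltnS.
Qed.

Definition fracE (d b : nat) (x : K) :=
  exists q : {poly {poly algC}}, (size q <= d.+1)%N /\ x = pv q / E ^+ b.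

(* Multiplying numerator and denominator by E^(b'-b) raises the degree by
   3 (b' - b). *)
Lemma fracE_weaken d b d' b' x : fracE d b x ->
  (b <= b')%N -> (d + 3 * (b' - b) <= d')%N -> fracE d' b' x.
Proof.
move=> [q [size_q ->]] b_le; have [k ->] : exists k, b' = (b + k)%N.
  by exists (b' - b)%N; rewrite subnKC.
rewrite addKn => d_le.
exists (q * E_poly ^+ k); split.
  by apply: leq_trans (size_polyMleq _ _) _; have := size_E_poly_exp k; lia.
by rewrite pvM pvX_exp pvE exprD; field; rewrite !expf_neq0 ?E_neq0.
Qed.

Lemma fracE_0 d b : fracE d b 0.
Proof. by exists 0; rewrite pv0 mul0r size_poly0. Qed.

Lemma fracE_add d b x y : fracE d b x -> fracE d b y -> fracE d b (x + y).
Proof.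
move=> [p [size_p ->]] [q [size_q ->]]; exists (p + q); rewrite pvD -mulrDl.
by split=> //; apply: leq_trans (size_polyD _ _) _; rewrite geq_max size_p size_q.
Qed.

Lemma fracE_opp d b x : fracE d b x -> fracE d b (- x).
Proof. by move=> [q [size_q ->]]; exists (- q); rewrite size_polyN pvN mulNr. Qed.

Lemma fracE_sum d b n (F : 'I_n -> K) :
  (forall i, fracE d b (F i)) -> fracE d b (\sum_(i < n) F i).
Proof. by move=> F_in; apply: big_ind => //; [apply: fracE_0 | apply: fracE_add]. Qed.

Lemma fracE_mul d1 b1 d2 b2 x y : fracE d1 b1 x -> fracE d2 b2 y ->
  fracE (d1 + d2) (b1 + b2) (x * y).
Proof.
move=> [p [size_p ->]] [q [size_q ->]]; exists (p * q); split.
  by apply: leq_trans (size_polyMleq _ _) _; lia.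
by rewrite pvM exprD invfM; ring.
Qed.

Lemma fracE_scale a d b x : fracE d b x -> fracE d b (iota a * x).
Proof.
move=> [q [size_q ->]]; exists (a%:P%:P * q); rewrite pvM pvC mulrA; split=> //.
by apply: leq_trans (size_polyMleq _ _) _; rewrite size_polyC; case: (_ != 0); lia.
Qed.

Lemma fracE_l : fracE 1 0 l.
Proof. by exists 'X; rewrite pvX expr0 divr1 size_polyX. Qed.

Lemma fracE_lE : fracE 1 1 (l / E).
Proof. by exists 'X; rewrite pvX expr1 size_polyX. Qed.

Lemma fracE_Dl : fracE 2 1 (D l).
Proof. by rewrite Dl; exists (- 'X^2); rewrite size_polyN size_polyXn pvN pvX_exp pvX expr1. Qed.

Lemma DE : D E = - 12 * l ^+ 4 / E.
Proof. by rewrite DB (D_mul 4) DX Dl Dc D_nat /=; field. Qed.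

(* D (P / E^b) = P_l D l / E^b + 12 b l^4 P / E^(b+2), so D raises (d, b)
   by at most (4, 2). *)
Lemma fracE_D d b x : fracE d b x -> fracE (d + 4) (b + 2) (D x).
Proof.
move=> [q [size_q ->]]; rewrite D_mul Dpv D_inv_exp // DE Dl.
have size_dq : (size q^`() <= d)%N.
  have [->|q_neq0] := eqVneq q 0; first by rewrite deriv0 size_poly0.
  by have := lt_size_deriv q_neq0; lia.
apply: fracE_add.
  apply: (@fracE_weaken (d + 1) (b + 1)); [|lia|lia].
  exists (q^`() * - 'X^2); split.
    by apply: leq_trans (size_polyMleq _ _) _; rewrite size_polyN size_polyXn; lia.
  by rewrite pvM pvN pvX_exp pvX exprD; field; rewrite ?expf_neq0 ?E_neq0.
exists (q * ((12 * b)%:R%:P%:P * 'X^4)); split.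
  apply: leq_trans (size_polyMleq _ _) _.
  have : (size ((12 * b)%:R%:P%:P * 'X^4 : {poly {poly algC}})%R <= 5)%N.
    apply: leq_trans (size_polyMleq _ _) _.
    by rewrite size_polyXn addnS /= addn4 !ltnS size_polyC_leq1.
  lia.
rewrite 2!pvM pvC pvX_exp pvX rmorph_nat addn2 [E ^+ b.+2]exprS natrM.
by field; rewrite ?expf_neq0 ?E_neq0.
Qed.

Lemma fracE_natM n d b x : fracE d b x -> fracE d b (n%:R * x).
Proof. by rewrite -(rmorph_nat iota); apply: fracE_scale. Qed.

Lemma fracE_divn n d b x : fracE d b x -> fracE d b (x / n%:R).
Proof. by rewrite mulrC -(rmorph_nat iota) -fmorphV; apply: fracE_scale. Qed.

Section Lambda.
Variable t : K.
Hypothesis root : 2 * l ^+ 3 + t * l + c = 0.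
Variables lam nu : nat -> K.
Hypothesis lam0 : lam 0%N = l.
Hypothesis nu0 : nu 0%N = 0.
Hypothesis nu_succ : forall k, nu k.+1 = D (lam k).
Hypothesis Dnu : forall k, D (nu k) = cubic_coef t c lam k.+1.

(* Order eta^-m of the nu-equation, solved for lambda_m (m > 0). *)
Lemma lam_rec m : (0 < m)%N -> lam m = (D (nu m.-1) - 2 * conv3_low lam m) * (l / E).
Proof.
case: m => // m _; rewrite /= Dnu /cubic_coef conv3_split // lam0 /=.
transitivity (lam m.+1 * ((6 * l ^+ 2 + t) * l / E)); last by ring.
by rewrite (cubic_disc root) divff // mulr1.
Qed.

Definition lam_deg p := if p is 0 then 1%N else (9 * p - 2)%N.
Definition lam_exp p := if p is 0 then 0%N else (5 * p - 1)%N.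

(* For odd m, each term of conv3_low has an odd index < m. *)
Lemma low_odd p : (forall q, (q < p)%N -> lam (2 * q).+1 = 0) ->
  conv3_low lam (2 * p).+1 = 0.
Proof.
move=> odd0; apply: (conv3_low_ind (P := eq^~ 0)) => [|x y -> ->|i j k ijk i_lt j_lt k_lt]; rewrite ?addr0 //.
have [a [ia|ia]] := even_or_odd i; last by rewrite ia odd0 ?mul0r //; lia.
have [b [jb|jb]] := even_or_odd j; last by rewrite jb odd0 ?mulr0 ?mul0r //; lia.
have [e [ke|ke]] := even_or_odd k; first by lia.
by rewrite ke odd0 ?mulr0 //; lia.
Qed.

Lemma lam_triple_bound p a b e : (a + b + e = p.+1)%N -> (a <= p)%N -> (b <= p)%N -> (e <= p)%N ->
  (lam_exp a + lam_exp b + lam_exp e <= 5 * p + 3)%N /\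
  (lam_deg a + lam_deg b + lam_deg e + 3 * (5 * p + 3 - (lam_exp a + lam_exp b + lam_exp e))
     <= 9 * p + 6)%N.
Proof. by case: a => [|a]; case: b => [|b]; case: e => [|e]; rewrite /lam_deg /lam_exp; lia. Qed.

Lemma low_even p :
  (forall q, (q <= p)%N -> lam (2 * q).+1 = 0) ->
  (forall q, (q <= p)%N -> fracE (lam_deg q) (lam_exp q) (lam (2 * q))) ->
  fracE (9 * p + 6) (5 * p + 3) (conv3_low lam (2 * p.+1)).
Proof.
move=> odd0 even_in; apply: conv3_low_ind => [|x y|i j k ijk i_lt j_lt k_lt].
- exact: fracE_0.
- exact: fracE_add.
have [a [ia|ia]] := even_or_odd i; last by rewrite ia odd0 ?mul0r; [apply: fracE_0|lia].
have [b [jb|jb]] := even_or_odd j; last by rewrite jb odd0 ?mulr0 ?mul0r; [apply: fracE_0|lia].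
have [e [ke|ke]] := even_or_odd k; last by rewrite ke odd0 ?mulr0; [apply: fracE_0|lia].
have [exp_le deg_le] := @lam_triple_bound p a b e ltac:(lia) ltac:(lia) ltac:(lia) ltac:(lia).
rewrite ia jb ke; apply: (fracE_weaken _ exp_le deg_le).
by apply: fracE_mul; [apply: fracE_mul|]; apply: even_in; lia.
Qed.

Lemma lam_odd_step p : (forall q, (q < p)%N -> lam (2 * q).+1 = 0) -> lam (2 * p).+1 = 0.
Proof.
move=> odd0; rewrite lam_rec // low_odd // mulr0 subr0 /=.
have -> : D (nu (2 * p)) = 0.
  case: p odd0 => [|p] odd0; first by rewrite nu0 D0.
  by rewrite mul2S nu_succ odd0 // !D0.
by rewrite mul0r.
Qed.

Lemma lam_even_step p :
  (forall q, (q <= p)%N -> lam (2 * q).+1 = 0 /\ fracE (lam_deg q) (lam_exp q) (lam (2 * q))) ->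
  fracE (lam_deg p.+1) (lam_exp p.+1) (lam (2 * p.+1)).
Proof.
move=> below; have odd0 q (q_le : (q <= p)%N) := (below q q_le).1.
have even_in q (q_le : (q <= p)%N) := (below q q_le).2.
have DDlam : fracE (9 * p + 6) (5 * p + 3) (D (nu (2 * p.+1).-1)).
  rewrite mul2S /= nu_succ; case: p below odd0 even_in => [|p] _ _ even_in.
    by rewrite lam0; apply: fracE_D fracE_Dl.
  apply: (fracE_weaken (fracE_D (fracE_D (even_in p.+1 (leqnn _))))); rewrite /lam_deg /lam_exp; lia.
have numer : fracE (9 * p + 6) (5 * p + 3)
    (D (nu (2 * p.+1).-1) - 2 * conv3_low lam (2 * p.+1)).
  exact: fracE_add DDlam (fracE_opp (fracE_natM 2 (low_even odd0 even_in))).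
by rewrite lam_rec //; apply: (fracE_weaken (fracE_mul numer fracE_lE)); rewrite /lam_deg /lam_exp; lia.
Qed.

Lemma lam_bounds p q : (q <= p)%N ->
  lam (2 * q).+1 = 0 /\ fracE (lam_deg q) (lam_exp q) (lam (2 * q)).
Proof.
elim: p q => [|p IH] q q_le.
  have -> : q = 0%N by lia.
  by split; [apply: lam_odd_step | rewrite lam0; apply: fracE_l].
have [|q_gt] := leqP q p; first exact: IH.
have -> : q = p.+1 by lia.
split; last exact: lam_even_step.
by apply: lam_odd_step => r r_lt; have [] := IH r ltac:(lia).
Qed.

Lemma lam_odd p : lam (2 * p).+1 = 0.
Proof. exact: (lam_bounds (leqnn p)).1. Qed.

Lemma lam_even p : fracE (lam_deg p) (lam_exp p) (lam (2 * p)).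
Proof. exact: (lam_bounds (leqnn p)).2. Qed.

Lemma conv_lam_odd n : \sum_(i < (2 * n).+4) lam i * lam ((2 * n).+3 - i)%N = 0.
Proof.
apply: big1 => i _; have := ltn_ord i.
have [a [->|->]] := even_or_odd i => i_lt; last by rewrite lam_odd mul0r.
by rewrite (_ : ((2 * n).+3 - 2 * a = (2 * (n.+1 - a)).+1)%N) ?lam_odd ?mulr0 //; lia.
Qed.

Lemma lam_pair_bound n a b : (a + b = n.+1)%N ->
  (lam_exp a + lam_exp b <= 5 * n + 4)%N /\
  (lam_deg a + lam_deg b + 3 * (5 * n + 4 - (lam_exp a + lam_exp b)) <= 9 * n + 8)%N.
Proof. by case: a => [|a]; case: b => [|b]; rewrite /lam_deg /lam_exp; lia. Qed.

Lemma conv_lam_even n :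
  fracE (9 * n + 8) (5 * n + 4) (\sum_(i < (2 * n).+3) lam i * lam ((2 * n).+2 - i)%N).
Proof.
apply: fracE_sum => i; have := ltn_ord i.
have [a [->|->]] := even_or_odd i => i_lt; last by rewrite lam_odd mul0r; apply: fracE_0.
have [exp_le deg_le] := @lam_pair_bound n a (n.+1 - a) ltac:(lia).
rewrite (_ : ((2 * n).+2 - 2 * a = 2 * (n.+1 - a))%N); last by lia.
exact: (fracE_weaken (fracE_mul (lam_even a) (lam_even _)) exp_le deg_le).
Qed.

Section Riccati.
Variables s1 s2 : K.
Hypothesis l_neq0 : l != 0.
Hypothesis s1_sq : s1 ^+ 2 = l.
Hypothesis s2_sq : s2 ^+ 2 = E.
Variables (Rm1 : K) (R : nat -> K).
Hypothesis Rm1_def : Rm1 = s2 / s1.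
Hypothesis R_init : 2 * Rm1 * R 0%N + D Rm1 = 6 * \sum_(i < 2) lam i * lam (1 - i)%N.
Hypothesis R_succ : forall k, 2 * Rm1 * R k.+1 + \sum_(i < k.+1) R i * R (k - i)%N + D (R k)
                  = 6 * \sum_(i < k.+3) lam i * lam (k.+2 - i)%N.

Local Notation rho := (s1 / s2).
Local Notation g := (6 * l ^+ 4 / E ^+ 2 - l / (2 * E)).

Let two_neq0 : 2 != 0 :> K := natr_iota_neq0 iota (n := 2) isT.

Lemma s1_neq0 : s1 != 0.
Proof. by apply: contraNneq l_neq0 => s1_0; rewrite -s1_sq s1_0 expr0n. Qed.

Lemma s2_neq0 : s2 != 0.
Proof. by apply: contraNneq E_neq0 => s2_0; rewrite -s2_sq s2_0 expr0n. Qed.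

Lemma rho_neq0 : rho != 0.
Proof. by rewrite mulf_neq0 ?invr_eq0 ?s1_neq0 ?s2_neq0. Qed.

Lemma rho_sq : rho ^+ 2 = l / E.
Proof. by rewrite expr_div_n s1_sq s2_sq. Qed.

Lemma D_rho : D rho = rho * g.
Proof.
rewrite D_mul DV ?s2_neq0 // (D_sqrt s1_sq s1_neq0) (D_sqrt s2_sq s2_neq0) DE Dl.
by rewrite -s2_sq -s1_sq; field; rewrite s1_neq0 s2_neq0 two_neq0.
Qed.

Lemma fracE_g : fracE 4 2 g.
Proof.
have -> : g = 6 * (l ^+ 4 / E ^+ 2) - l / E / 2 by field; rewrite two_neq0 E_neq0.
apply: fracE_add; first by apply: fracE_natM; exists 'X^4; rewrite pvX_exp pvX size_polyXn.
by apply: fracE_opp; apply: fracE_divn; apply: (fracE_weaken fracE_lE).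
Qed.

Lemma R_rec k : R k.+1 = rho * ((6 * \sum_(i < k.+3) lam i * lam (k.+2 - i)%N
                                  - \sum_(i < k.+1) R i * R (k - i)%N - D (R k)) / 2).
Proof. by rewrite -R_succ Rm1_def; field; rewrite s1_neq0 s2_neq0 two_neq0. Qed.

(* Since lambda_1 = 0, the first equation gives R_0 = g / 2. *)
Lemma R0_eq : R 0%N = g / 2.
Proof.
have lam1 : lam 1%N = 0 := lam_odd 0.
move: R_init; rewrite !big_ord_recr big_ord0 /= lam1 mulr0 mul0r !addr0 mulr0.
rewrite Rm1_def -invf_div DV ?rho_neq0 // D_rho => init.
transitivity ((2 * rho^-1 * R 0%N + - (rho * g) / rho ^+ 2) * rho / 2 + g / 2).
  by field; rewrite two_neq0 E_neq0 s1_neq0 s2_neq0.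
by rewrite init mul0r mul0r add0r.
Qed.

(* The odd coefficients carry one factor rho = sqrt (l / E). *)
Definition rho_fracE d b x := exists y, fracE d b y /\ x = rho * y.

Lemma rho_fracE_sum d b n (F : 'I_n -> K) :
  (forall i, rho_fracE d b (F i)) -> rho_fracE d b (\sum_(i < n) F i).
Proof.
move=> F_in; apply: big_ind => //; first by exists 0; rewrite mulr0; split=> //; apply: fracE_0.
move=> x y [x' [x_in ->]] [y' [y_in ->]].
by exists (x' + y'); rewrite mulrDr; split=> //; apply: fracE_add.
Qed.

Definition R_even_ok n := fracE (9 * n + 4) (5 * n + 2) (R (2 * n)).
Definition R_odd_ok n := rho_fracE (9 * n + 8) (5 * n + 4) (R (2 * n).+1).

(* The R-convolutions: at even order every product is rho-free (rho^2 = l/E),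
   at odd order it carries exactly one rho. *)
Lemma conv_R_even n :
  (forall a, (a <= n)%N -> R_even_ok a) -> (forall a, (a < n)%N -> R_odd_ok a) ->
  fracE (9 * n + 8) (5 * n + 4) (\sum_(i < (2 * n).+1) R i * R (2 * n - i)%N).
Proof.
move=> even_ok odd_ok; apply: fracE_sum => i; have := ltn_ord i.
have [a [->|->]] := even_or_odd i => i_lt.
  rewrite (_ : (2 * n - 2 * a = 2 * (n - a))%N); last by lia.
  by apply: (fracE_weaken (fracE_mul (even_ok a _) (even_ok (n - a)%N _))); lia.
rewrite (_ : (2 * n - (2 * a).+1 = (2 * (n - a).-1).+1)%N); last by lia.
have [x [x_in ->]] := odd_ok a ltac:(lia).
have [y [y_in ->]] := odd_ok (n - a).-1 ltac:(lia).
rewrite mulrACA -expr2 rho_sq.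
by apply: (fracE_weaken (fracE_mul fracE_lE (fracE_mul x_in y_in))); lia.
Qed.

Lemma conv_R_odd n : (forall a, (a <= n)%N -> R_even_ok a /\ R_odd_ok a) ->
  rho_fracE (9 * n + 12) (5 * n + 6) (\sum_(i < (2 * n).+2) R i * R ((2 * n).+1 - i)%N).
Proof.
move=> ok; apply: rho_fracE_sum => i; have := ltn_ord i.
have [a [->|->]] := even_or_odd i => i_lt.
  rewrite (_ : ((2 * n).+1 - 2 * a = (2 * (n - a)).+1)%N); last by lia.
  have [y [y_in ->]] := (ok (n - a)%N ltac:(lia)).2.
  exists (R (2 * a) * y); rewrite mulrCA; split=> //.
  by apply: (fracE_weaken (fracE_mul (ok a _).1 y_in)); lia.
rewrite (_ : ((2 * n).+1 - (2 * a).+1 = 2 * (n - a))%N); last by lia.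
have [x [x_in ->]] := (ok a ltac:(lia)).2.
exists (x * R (2 * (n - a))); rewrite mulrA; split=> //.
by apply: (fracE_weaken (fracE_mul x_in (ok (n - a)%N _).1)); lia.
Qed.

Lemma R_odd_step n :
  (forall a, (a <= n)%N -> R_even_ok a) -> (forall a, (a < n)%N -> R_odd_ok a) -> R_odd_ok n.
Proof.
move=> even_ok odd_ok; rewrite /R_odd_ok R_rec; eexists; split; last reflexivity.
apply: fracE_divn; apply: fracE_add; first apply: fracE_add.
- exact: fracE_natM (conv_lam_even n).
- exact: fracE_opp (conv_R_even even_ok odd_ok).
- by apply: fracE_opp; apply: (fracE_weaken (fracE_D (even_ok n _))); lia.
Qed.

Lemma R_even_step n : (forall a, (a <= n)%N -> R_even_ok a /\ R_odd_ok a) -> R_even_ok n.+1.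
Proof.
move=> ok; rewrite /R_even_ok mul2S R_rec conv_lam_odd.
have [X [X_in ->]] := (ok n (leqnn n)).2.
have [S [S_in ->]] := conv_R_odd ok.
have gX : fracE (9 * n + 12) (5 * n + 6) (g * X).
  by apply: (fracE_weaken (fracE_mul fracE_g X_in)); lia.
have DX : fracE (9 * n + 12) (5 * n + 6) (D X).
  by apply: (fracE_weaken (fracE_D X_in)); lia.
rewrite D_mul D_rho.
have -> : rho * ((6 * 0 - rho * S - (rho * g * X + rho * D X)) / 2)
          = l / E * (- (S + g * X + D X) / 2) by rewrite -rho_sq; ring.
have sum_in : fracE (9 * n + 12) (5 * n + 6) (S + g * X + D X).
  by apply: fracE_add => //; apply: fracE_add.
by apply: (fracE_weaken (fracE_mul fracE_lE (fracE_divn 2 (fracE_opp sum_in)))); lia.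
Qed.

Lemma R_bounds n a : (a <= n)%N -> R_even_ok a /\ R_odd_ok a.
Proof.
have even0 : R_even_ok 0 by rewrite /R_even_ok R0_eq; apply: fracE_divn fracE_g.
elim: n a => [|n IH] a a_le.
  have -> : a = 0%N by lia.
  by split=> //; apply: R_odd_step => [b b_le|b b_lt]; [have -> : b = 0%N by lia|lia].
have [|a_gt] := leqP a n; first exact: IH.
have -> : a = n.+1 by lia.
have even_next := R_even_step IH.
split=> //; apply: R_odd_step => [b b_le|b b_lt]; last by have [] := IH b ltac:(lia).
have [b_le_n|b_gt] := leqP b n; first by have [] := IH b b_le_n.
by have -> : b = n.+1 by lia.
Qed.

Lemma R_even_bound n :
  exists q : {poly {poly algC}}, (size q <= 9 * n + 5)%N /\ R (2 * n) = pv q / E ^+ (5 * n + 2).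
Proof.
have [q [size_q ->]] := (R_bounds (leqnn n)).1.
by exists q; split=> //; rewrite addnS.
Qed.

Lemma R_odd_bound n :
  exists q : {poly {poly algC}}, (size q <= 9 * n + 9)%N /\ R (2 * n + 1) = s1 * pv q / s2 ^+ (10 * n + 9).
Proof.
rewrite addn1; have [y [[q [size_q ->]] ->]] := (R_bounds (leqnn n)).2.
exists q; split; first by rewrite addnS.
rewrite -s2_sq -exprM (_ : (10 * n + 9 = (2 * (5 * n + 4)).+1)%N); last by lia.
by rewrite exprS; field; rewrite s2_neq0 expf_neq0 ?s2_neq0.
Qed.

End Riccati.
End Lambda.
End Representation.
End Derivation.


Unset Implicit Arguments.

Theorem mainTheorem19
  (K : fieldType) (iota : {rmorphism algC -> K}) (D : K -> K)
  (HDadd : forall x y, D (x + y) = D x + D y)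
  (HDmul : forall x y, D (x * y) = D x * y + x * D y)
  (HDconst : forall a, D (iota a) = 0)
  (t c l s1 s2 : K) (Ht : D t = 1) (Hc : D c = 0)
  (Hl : 2 * l ^+ 3 + t * l + c = 0) (Hl0 : l != 0)
  (HDel0 : 4 * l ^+ 3 - c != 0)
  (Hs1 : s1 ^+ 2 = l) (Hs2 : s2 ^+ 2 = 4 * l ^+ 3 - c)
  (lam nu : nat -> K) (Hlam0 : lam 0%N = l) (Hnu0 : nu 0%N = 0)
  (Hlam : forall k, nu k.+1 = D (lam k))
  (Hnu : forall k, D (nu k) = cubic_coef t c lam k.+1)
  (Rm1 : K) (R : nat -> K) (HRm1 : Rm1 = s2 / s1)
  (HR0 : 2 * Rm1 * R 0%N + D Rm1 = 6 * \sum_(i < 2) lam i * lam (1 - i)%N)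
  (HR : forall k, 2 * Rm1 * R k.+1 + \sum_(i < k.+1) R i * R (k - i)%N + D (R k)
                  = 6 * \sum_(i < k.+3) lam i * lam (k.+2 - i)%N) :
  forall n : nat,
    (exists q : {poly {poly algC}}, (size q <= 9 * n + 5)%N /\
       R (2 * n)%N = peval2 iota q l c / (4 * l ^+ 3 - c) ^+ (5 * n + 2)) /\
    (exists q : {poly {poly algC}}, (size q <= 9 * n + 9)%N /\
       R (2 * n + 1)%N = s1 * peval2 iota q l c / s2 ^+ (10 * n + 9)).
Proof.
have Dl := D_cubic_root HDadd HDmul HDconst Ht Hc Hl HDel0.
move=> n; split.
  exact: (R_even_bound HDadd HDmul HDconst Hc HDel0 Dl Hl Hlam0 Hnu0 Hlam Hnu
            Hl0 Hs1 Hs2 HRm1 HR0 HR).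
exact: (R_odd_bound HDadd HDmul HDconst Hc HDel0 Dl Hl Hlam0 Hnu0 Hlam Hnu
          Hl0 Hs1 Hs2 HRm1 HR0 HR).
Qed.
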